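(* Let $F$ satisfy (G1)–(G3), let $\mu$ be an ergodic stationary probability measure of $\Pi(F)$, and let $k,k'\in\{1,\dots,N\}$. Then for every $\varepsilon>0$ there exist admissible compositions $G_A,G_B:I_k\to I_{k'}$ with $G_A(I_{\mu,k})\subset U_\varepsilon(A_{\mu,k'})$ and $G_B(I_{\mu,k})\subset U_\varepsilon(B_{\mu,k'})$.
   Context: Setting: $N\ge1$; $\{0,1\}$-matrix $A=(a_{ij})$ with some power having all entries positive; stochastic matrix $\Pi=(\pi_{ij})$ with $\pi_{ij}>0$ iff $a_{ij}=1$. $I=[0,1]$; $f_1,\dots,f_N:I\to I$ strictly increasing $C^1$ diffeomorphisms onto their images with $f_k(I)\subset(0,1)$. $\mathcal I=\{1,\dots,N\}\times I$, $I_k=\{k\}\times I$. $(k,m)$ admissible iff $\pi_{km}>0$. $\Pi(F)$: Markov process jumping from $(i,x)$ to $(j,f_i(x))$ with probability $\pi_{ij}$. $\mu$ stationary iff $\mu_j=\sum_i\pi_{ij}(f_i)_*\mu_i$ ($\mu_k=\mu|_{I_k}$); ergodic = extreme point. $A_{\mu,k}=\min\operatorname{supp}\mu_k$, $B_{\mu,k}=\max\operatorname{supp}\mu_k$, $I_{\mu,k}=[A_{\mu,k},B_{\mu,k}]$. $U_\varepsilon$ denotes the $\varepsilon$-neighborhood. Admissible composition $f_{w_1\dots w_n}=f_{w_n}\circ\dots\circ f_{w_1}:I_{w_1}\to I_{w_{n+1}}$ with each $(w_i,w_{i+1})$, $i\le n$, admissible; simple transition: $w_1,\dots,w_{n+1}$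 distinct; simple return: $w_1,\dots,w_n$ distinct, $w_{n+1}=w_1$. (G1) every fixed point $q$ of a simple return $g$ has $g'(q)\ne1$; (G2) no simple transition maps an attracting (resp. repelling) fixed point of a simple return to a repelling (resp. attracting) fixed point of a simple return; (G3) no $a_1,\dots,a_N\in I$ with $f_i(a_i)=a_j$ for all admissible $(i,j)$. *)

From Stdlib Require Import Reals List.
Import ListNotations.
Open Scope R_scope.

Fixpoint rsum (n : nat) (f : nat -> R) : R :=
  match n with O => 0 | S n' => rsum n' f + f n' end.

Fixpoint mpow (N : nat) (a : nat -> nat -> R) (p : nat) (i j : nat) : R :=
  match p with
  | O => if Nat.eqb i j then 1 else 0
  | S p' => rsum N (fun l => mpow N a p' i l * a l j)
  end.

Definition inI (x : R) : Prop := 0 <= x <= 1.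

Definition has_deriv_I (g : R -> R) (x l : R) : Prop :=
  forall eps, eps > 0 -> exists delta, delta > 0 /\
    forall y, inI y -> 0 < Rabs (y - x) < delta ->
      Rabs ((g y - g x) / (y - x) - l) < eps.

(* f : I -> I strictly increasing C^1 diffeomorphism onto its image, f(I) in (0,1) *)
Definition good_map (g : R -> R) : Prop :=
  (forall x y, inI x -> inI y -> x < y -> g x < g y) /\
  (exists dg : R -> R,
     (forall x, inI x -> has_deriv_I g x (dg x)) /\
     (forall x, inI x -> dg x > 0) /\
     (forall x, inI x -> forall eps, eps > 0 -> exists delta, delta > 0 /\
        forall y, inI y -> Rabs (y - x) < delta -> Rabs (dg y - dg x) < eps)) /\
  (forall x, inI x -> 0 < g x < 1).

(* Word [w1; ...; w_{n+1}] encodes f_{w_n} o ... o f_{w_1} : I_{w1} -> I_{w_{n+1}}. *)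
Fixpoint acomp (f : nat -> R -> R) (w : list nat) (x : R) : R :=
  match w with
  | [] => x
  | [_] => x
  | a :: ((_ :: _) as t) => acomp f t (f a x)
  end.

Fixpoint adm_chain (pi : nat -> nat -> R) (w : list nat) : Prop :=
  match w with
  | a :: ((b :: _) as t) => pi a b > 0 /\ adm_chain pi t
  | _ => True
  end.

Definition admissible (N : nat) (pi : nat -> nat -> R) (w : list nat) : Prop :=
  (2 <= length w)%nat /\ (forall c, In c w -> (c < N)%nat) /\ adm_chain pi w.

Definition simple_transition N pi (w : list nat) : Prop :=
  admissible N pi w /\ NoDup w.

Definition simple_return N pi (w : list nat) : Prop :=
  admissible N pi w /\ NoDup (removelast w) /\ last w 0%nat = hd 0%nat w.

Definition attracting_fp N pi f (w : list nat) (q : R) : Prop :=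
  simple_return N pi w /\ inI q /\ acomp f w q = q /\
  exists l, has_deriv_I (acomp f w) q l /\ Rabs l < 1.

Definition repelling_fp N pi f (w : list nat) (q : R) : Prop :=
  simple_return N pi w /\ inI q /\ acomp f w q = q /\
  exists l, has_deriv_I (acomp f w) q l /\ Rabs l > 1.

Definition G1 N pi f : Prop :=
  forall w q l, simple_return N pi w -> inI q -> acomp f w q = q ->
    has_deriv_I (acomp f w) q l -> l <> 1.

Definition G2 N pi f : Prop :=
  forall v w w' q q', simple_transition N pi v ->
    hd 0%nat v = hd 0%nat w -> last v 0%nat = hd 0%nat w' ->
    ((attracting_fp N pi f w q -> repelling_fp N pi f w' q' -> acomp f v q <> q') /\
     (repelling_fp N pi f w q -> attracting_fp N pi f w' q' -> acomp f v q <> q')).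

Definition G3 N pi f : Prop :=
  ~ exists a : nat -> R, (forall i, (i < N)%nat -> inI (a i)) /\
      forall i j, (i < N)%nat -> (j < N)%nat -> pi i j > 0 -> f i (a i) = a j.

Definition is_open (U : R -> Prop) : Prop :=
  forall x, U x -> exists eps, eps > 0 /\ forall y, Rabs (y - x) < eps -> U y.

Inductive borel : (R -> Prop) -> Prop :=
| borel_open U : is_open U -> borel U
| borel_compl U : borel U -> borel (fun x => ~ U x)
| borel_union (A : nat -> R -> Prop) :
    (forall n, borel (A n)) -> borel (fun x => exists n, A n x).

Definition measure_on_I (m : (R -> Prop) -> R) : Prop :=
  m (fun _ => False) = 0 /\
  (forall B, borel B -> 0 <= m B) /\
  (forall A : nat -> R -> Prop, (forall n, borel (A n)) ->
     (forall n p x, n <> p -> A n x -> A p x -> False) ->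
     infinite_sum (fun n => m (A n)) (m (fun x => exists n, A n x))) /\
  m (fun x => ~ inI x) = 0.

(* mu k = restriction of mu to I_k, k = 0..N-1 *)
Definition prob_measure N (mu : nat -> (R -> Prop) -> R) : Prop :=
  (forall k, (k < N)%nat -> measure_on_I (mu k)) /\
  rsum N (fun k => mu k (fun _ => True)) = 1.

Definition stationary N pi (f : nat -> R -> R) (mu : nat -> (R -> Prop) -> R) : Prop :=
  forall j B, (j < N)%nat -> borel B ->
    mu j B = rsum N (fun i => pi i j * mu i (fun x => inI x /\ B (f i x))).

Definition stat_prob N pi f mu : Prop := prob_measure N mu /\ stationary N pi f mu.

Definition same_measure N (mu nu : nat -> (R -> Prop) -> R) : Prop :=
  forall k B, (k < N)%nat -> borel B -> mu k B = nu k B.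

Definition ergodic N pi f mu : Prop :=
  stat_prob N pi f mu /\
  forall mu1 mu2 t, stat_prob N pi f mu1 -> stat_prob N pi f mu2 -> 0 < t < 1 ->
    (forall k B, (k < N)%nat -> borel B -> mu k B = t * mu1 k B + (1 - t) * mu2 k B) ->
    same_measure N mu1 mu2.

Definition in_supp (m : (R -> Prop) -> R) (x : R) : Prop :=
  forall eps, eps > 0 -> m (fun y => Rabs (y - x) < eps) > 0.

Definition is_min_supp m A : Prop := in_supp m A /\ forall x, in_supp m x -> A <= x.
Definition is_max_supp m B : Prop := in_supp m B /\ forall x, in_supp m x -> x <= B.

(* Fix a word origin k and a point x0 of supp mu_k.  For a sign s = +1 (resp. -1)
   let E_j be the set of y >= (resp. <=) some image acomp w x0 of x0 under an
   admissible word w from k to j.  Each E_j is a half-line, hence Borel, and the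
   family (E_j) is invariant under the Markov dynamics because the f_i are
   increasing.  An invariant family splits every stationary measure into two
   stationary pieces, so by ergodicity (E_j) is either of full or of null mass.
   - Full mass: every point z of supp mu_j, in particular A_{mu,k'} (s = +1) or
     B_{mu,k'} (s = -1), is eps-approached from the correct side by some image
     of x0.
   - Null mass: no image of x0 can lie strictly inside E_j, so (images being in
     the support) all words from k to j send x0 to the same point a_j, and the
     family (a_j) violates (G3).
   Taking x0 = B_{mu,k}, s = +1 and x0 = A_{mu,k}, s = -1, and using that
   compositions are increasing and map supp mu_k into supp mu_{k'}, gives the
   theorem.  Only (G3) among the
   genericity conditions is needed. *)

From Stdlib Require Import Reals List Lra Lia Classical ClassicalEpsilon
  FunctionalExtensionality PropExtensionality.
Import ListNotations.
Open Scope R_scope.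

Lemma pred_ext (U V : R -> Prop) : (forall x, U x <-> V x) -> U = V.
Proof.
  intro H; apply functional_extensionality; intro x;
  apply propositional_extensionality; auto.
Qed.

Lemma borel_ext (U V : R -> Prop) : (forall x, U x <-> V x) -> borel U -> borel V.
Proof. intros H HU; rewrite <- (pred_ext U V H); exact HU. Qed.

Lemma borel_union2 (U V : R -> Prop) : borel U -> borel V -> borel (fun x => U x \/ V x).
Proof.
  intros HU HV.
  apply borel_ext with (U := fun x => exists n, (match n with O => U | _ => V end) x).
  - intro x; split.
    + intros [[|n] H]; auto.
    + intros [H|H]; [exists O | exists 1%nat]; auto.
  - apply borel_union; intros [|n]; auto.
Qed.

Lemma borel_inter (U V : R -> Prop) : borel U -> borel V -> borel (fun x => U x /\ V x).
Proof.
  intros HU HV.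
  apply borel_ext with (U := fun x => ~ (~ U x \/ ~ V x)).
  - intro x; split; [intro H; split; apply NNPP; tauto | tauto].
  - apply borel_compl, borel_union2; apply borel_compl; auto.
Qed.

Lemma borel_true : borel (fun _ => True).
Proof. apply borel_open; intros x _; exists 1; split; [lra | auto]. Qed.

Lemma borel_false : borel (fun _ => False).
Proof. apply borel_open; intros x []. Qed.

Lemma borel_ball (c r : R) : borel (fun y => Rabs (y - c) < r).
Proof.
  apply borel_open; intros x Hx; exists (r - Rabs (x - c)); split; [lra |].
  intros y Hy.
  assert (Rabs (y - c) <= Rabs (y - x) + Rabs (x - c)).
  { replace (y - c) with ((y - x) + (x - c)) by ring; apply Rabs_triang. }
  lra.
Qed.

Lemma borel_singleton (c : R) : borel (fun y => y = c).
Proof.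
  apply borel_ext with (U := fun y => ~ (y <> c)); [intro y; split; [apply NNPP | tauto] |].
  apply borel_compl, borel_open; intros x Hx.
  exists (Rabs (x - c)); split; [apply Rabs_pos_lt; intro; apply Hx; lra |].
  intros y Hy ->; rewrite Rabs_minus_sym in Hy; lra.
Qed.

Lemma borel_inI : borel inI.
Proof.
  apply borel_ext with (U := fun x => ~ (x < 0 \/ x > 1)).
  - intro x; unfold inI; split; intro H; [split; apply Rnot_lt_le; tauto | lra].
  - apply borel_compl, borel_open; intros x [H|H].
    + exists (- x); split; [lra |]; intros y Hy; left; apply Rabs_def2 in Hy; lra.
    + exists (x - 1); split; [lra |]; intros y Hy; right; apply Rabs_def2 in Hy; lra.
Qed.

(* An up-closed set is its open part {y | U (y - q) for some q > 0} plus at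
   most one boundary point. *)
Lemma borel_upset (U : R -> Prop) : (forall y z, U y -> y <= z -> U z) -> borel U.
Proof.
  intros Hup.
  set (V := fun y => exists q, q > 0 /\ U (y - q)).
  assert (HV : borel V).
  { apply borel_open; intros y [q [Hq Hy]]; exists (q / 2); split; [lra |].
    intros z Hz; exists (q / 2); split; [lra |].
    apply Hup with (y - q); auto; apply Rabs_def2 in Hz; lra. }
  assert (HVU : forall y, V y -> U y).
  { intros y [q [Hq H]]; apply Hup with (y - q); auto; lra. }
  destruct (classic (exists c, U c /\ ~ V c)) as [[c [Hc Hnc]] | Hno].
  - apply borel_ext with (U := fun y => V y \/ y = c);
      [| apply borel_union2; [exact HV | apply borel_singleton]].
    intro y; split; [intros [H | ->]; auto |].
    intro Hy; destruct (classic (V y)) as [HVy | HVy]; [auto | right].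
    destruct (Rtotal_order y c) as [Hlt | [Heq | Hgt]]; auto; exfalso.
    + apply Hnc; exists (c - y); split; [lra |]; replace (c - (c - y)) with y by ring; auto.
    + apply HVy; exists (y - c); split; [lra |]; replace (y - (y - c)) with c by ring; auto.
  - apply borel_ext with (U := V); [| exact HV].
    intro y; split; [apply HVU | intro Hy; apply NNPP; intro Hn; apply Hno; eauto].
Qed.

Lemma borel_signed_upset (s : R) (U : R -> Prop) : s = 1 \/ s = -1 ->
  (forall y z, U y -> s * y <= s * z -> U z) -> borel U.
Proof.
  intros [-> | ->] Hup.
  - apply borel_upset; intros y z Hy Hyz; apply Hup with y; auto; lra.
  - apply borel_ext with (U := fun x => ~ ~ U x); [intro x; split; [apply NNPP | tauto] |].
    apply borel_compl, borel_upset; intros y z Hy Hyz Hz; apply Hy.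
    apply Hup with z; auto; lra.
Qed.

Definition contI (g : R -> R) : Prop :=
  forall x, inI x -> forall eps, eps > 0 -> exists delta, delta > 0 /\
    forall y, inI y -> Rabs (y - x) < delta -> Rabs (g y - g x) < eps.

(* A function differentiable within I at x is continuous there:
   |g y - g x| <= (|l| + 1) |y - x| near x. *)
Lemma deriv_cont (g : R -> R) (x l : R) : has_deriv_I g x l ->
  forall eps, eps > 0 -> exists delta, delta > 0 /\
    forall y, inI y -> Rabs (y - x) < delta -> Rabs (g y - g x) < eps.
Proof.
  intros Hd eps Heps.
  destruct (Hd 1 Rlt_0_1) as [d [Hd0 Hd1]].
  set (M := Rabs l + 1).
  assert (HM : M > 0) by (unfold M; pose proof (Rabs_pos l); lra).
  exists (Rmin d (eps / M)); split.
  { apply Rmin_pos; auto; apply Rdiv_lt_0_compat; auto. }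
  intros y Hy Hyx.
  destruct (Req_dec y x) as [-> | Hne]; [rewrite Rminus_diag, Rabs_R0; auto |].
  assert (Hp : 0 < Rabs (y - x)) by (apply Rabs_pos_lt; lra).
  assert (Hq : Rabs ((g y - g x) / (y - x)) <= M).
  { pose proof (Hd1 y Hy (conj Hp (Rlt_le_trans _ _ _ Hyx (Rmin_l _ _)))).
    replace ((g y - g x) / (y - x)) with (((g y - g x) / (y - x) - l) + l) by ring.
    pose proof (Rabs_triang ((g y - g x) / (y - x) - l) l); unfold M; lra. }
  assert (Hyx2 : Rabs (y - x) < eps / M) by (eapply Rlt_le_trans; [exact Hyx | apply Rmin_r]).
  replace (g y - g x) with (((g y - g x) / (y - x)) * (y - x)) by (field; lra).
  rewrite Rabs_mult.
  apply Rle_lt_trans with (M * Rabs (y - x)); [apply Rmult_le_compat_r; auto; apply Rabs_pos |].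
  apply Rlt_le_trans with (M * (eps / M)); [apply Rmult_lt_compat_l; auto | right; field; lra].
Qed.

Lemma good_contI (g : R -> R) : good_map g -> contI g.
Proof. intros [_ [[dg [Hd _]] _]] x Hx; eapply deriv_cont; eauto. Qed.

Lemma good_le (g : R -> R) (x y : R) : good_map g -> inI x -> inI y -> x <= y -> g x <= g y.
Proof. intros [Hm _] Hx Hy [Hlt | ->]; [left; apply Hm; auto | lra]. Qed.

Lemma good_signed_le (g : R -> R) (s x y : R) : s = 1 \/ s = -1 -> good_map g ->
  inI x -> inI y -> s * x <= s * y -> s * g x <= s * g y.
Proof.
  intros [-> | ->] Hg Hx Hy Hxy.
  - pose proof (good_le g x y Hg Hx Hy ltac:(lra)); lra.
  - pose proof (good_le g y x Hg Hy Hx ltac:(lra)); lra.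
Qed.

Lemma borel_preimage (g : R -> R) (B : R -> Prop) :
  contI g -> borel B -> borel (fun x => inI x /\ B (g x)).
Proof.
  intros Hc HB; induction HB as [U HU | U HU IH | A HA IH].
  - set (V := fun x => exists d, d > 0 /\ forall y, inI y -> Rabs (y - x) < d -> U (g y)).
    apply borel_ext with (U := fun x => inI x /\ V x).
    + intro x; split; intros [Hx H]; split; auto.
      * destruct H as [d [Hd H]]; apply H; auto; rewrite Rminus_diag, Rabs_R0; auto.
      * destruct (HU _ H) as [e [He HUe]].
        destruct (Hc x Hx e He) as [d [Hd Hd']].
        exists d; split; auto.
    + apply borel_inter; [apply borel_inI |].
      apply borel_open; intros x [d [Hd H]].
      exists (d / 2); split; [lra |]; intros z Hz.
      exists (d / 2); split; [lra |]; intros y Hy Hyz; apply H; auto.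
      replace (y - x) with ((y - z) + (z - x)) by ring.
      pose proof (Rabs_triang (y - z) (z - x)); lra.
  - apply borel_ext with (U := fun x => inI x /\ ~ (inI x /\ U (g x))); [intro x; tauto |].
    apply borel_inter; [apply borel_inI | apply borel_compl; auto].
  - apply borel_ext with (U := fun x => exists n, inI x /\ A n (g x)).
    + intro x; split; [intros [n [H1 H2]]; eauto | intros [H1 [n H2]]; eauto].
    + apply borel_union; auto.
Qed.

Lemma borel_preimage_good (g : R -> R) (B : R -> Prop) :
  good_map g -> borel B -> borel (fun x => inI x /\ B (g x)).
Proof. intros Hg; apply borel_preimage, good_contI, Hg. Qed.

Lemma M_ext (m : (R -> Prop) -> R) (U V : R -> Prop) : (forall x, U x <-> V x) -> m U = m V.
Proof. intro H; rewrite (pred_ext U V H); auto. Qed.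

Lemma M_pos (m : (R -> Prop) -> R) (B : R -> Prop) : measure_on_I m -> borel B -> 0 <= m B.
Proof. intros [_ [H _]] HB; auto. Qed.

Lemma M_add (m : (R -> Prop) -> R) (B D : R -> Prop) : measure_on_I m -> borel B -> borel D ->
  m B = m (fun x => B x /\ D x) + m (fun x => B x /\ ~ D x).
Proof.
  intros [H0 [_ [Hadd _]]] HB HD.
  set (A := fun n : nat => match n with O => (fun x => B x /\ D x)
             | 1%nat => (fun x => B x /\ ~ D x) | _ => (fun _ => False) end).
  assert (HA : forall n, borel (A n)).
  { intros [|[|n]]; simpl; [apply borel_inter | apply borel_inter | apply borel_false]; auto.
    apply borel_compl; auto. }
  assert (Hdis : forall n p x, n <> p -> A n x -> A p x -> False).
  { intros [|[|n]] [|[|p]] x Hnp; simpl; try tauto; intros; lia. }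
  pose proof (Hadd A HA Hdis) as Hs.
  rewrite (M_ext m _ B) in Hs.
  2:{ intro x; split; [intros [[|[|n]] H]; simpl in H; tauto |].
      intro Hb; destruct (classic (D x)); [exists O | exists 1%nat]; simpl; auto. }
  apply (uniqueness_sum _ _ _ Hs).
  intros eps Heps; exists 1%nat; intros n Hn.
  replace (sum_f_R0 (fun n => m (A n)) n)
    with (m (fun x => B x /\ D x) + m (fun x => B x /\ ~ D x)).
  { unfold Rdist; rewrite Rminus_diag, Rabs_R0; auto. }
  induction n as [|n IH]; [lia |].
  destruct n as [|n]; [simpl; auto |].
  rewrite tech5, <- IH by lia; simpl; rewrite H0; ring.
Qed.

Lemma M_mono (m : (R -> Prop) -> R) (B D : R -> Prop) : measure_on_I m -> borel B -> borel D ->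
  (forall x, B x -> D x) -> m B <= m D.
Proof.
  intros Hm HB HD Hs.
  rewrite (M_add m D B Hm HD HB), (M_ext m (fun x => D x /\ B x) B) by (intro x; split; [tauto | auto]).
  pose proof (M_pos m (fun x => D x /\ ~ B x) Hm (borel_inter _ _ HD (borel_compl _ HB))); lra.
Qed.

Lemma M_outside_I (m : (R -> Prop) -> R) (B : R -> Prop) : measure_on_I m -> borel B ->
  (forall x, B x -> ~ inI x) -> m B = 0.
Proof.
  intros Hm HB Hout; pose proof Hm as [_ [_ [_ Hn]]].
  apply Rle_antisym; [rewrite <- Hn; apply M_mono; auto; apply borel_compl, borel_inI |].
  apply M_pos; auto.
Qed.

Lemma M_inI (m : (R -> Prop) -> R) (B : R -> Prop) : measure_on_I m -> borel B ->
  m B = m (fun x => B x /\ inI x).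
Proof.
  intros Hm HB.
  rewrite (M_add m B inI Hm HB borel_inI), (M_outside_I m (fun x => B x /\ ~ inI x)); [ring | auto | | tauto].
  apply borel_inter, borel_compl, borel_inI; auto.
Qed.

Lemma restr_measure (m : (R -> Prop) -> R) (E : R -> Prop) (c : R) :
  measure_on_I m -> borel E -> 0 <= c ->
  measure_on_I (fun B => c * m (fun y => B y /\ E y)).
Proof.
  intros Hm HE Hc. pose proof Hm as [H0 [Hp [Hadd Hn]]].
  split; [| split; [| split]].
  - rewrite (M_ext m _ (fun _ => False)) by tauto; rewrite H0; ring.
  - intros B HB; apply Rmult_le_pos; auto; apply Hp, borel_inter; auto.
  - intros A HA Hdis.
    assert (Hs := Hadd (fun n y => A n y /\ E y) (fun n => borel_inter _ _ (HA n) HE)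
                       (fun n p x Hnp H1 H2 => Hdis n p x Hnp (proj1 H1) (proj1 H2))).
    rewrite (M_ext m _ (fun y => (exists n, A n y) /\ E y)) in Hs
      by (intro x; split; [intros [n [H1 H2]]; eauto | intros [[n H1] H2]; eauto]).
    intros eps Heps.
    assert (Hc2 : Un_cv (fun _ : nat => c) c).
    { intros e He; exists O; intros; unfold Rdist; rewrite Rminus_diag, Rabs_R0; auto. }
    destruct (CV_mult _ _ _ _ Hc2 Hs eps Heps) as [K HK].
    exists K; intros n Hkn.
    replace (sum_f_R0 (fun n0 => c * m (fun y => A n0 y /\ E y)) n)
      with (c * sum_f_R0 (fun n0 => m (fun y => A n0 y /\ E y)) n); [apply HK; auto |].
    clear; induction n; simpl; auto; rewrite <- IHn; ring.
  - rewrite (M_outside_I m); [ring | auto | | tauto].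
    apply borel_inter, HE; apply borel_compl, borel_inI.
Qed.

Lemma rsum_ext (n : nat) (f g : nat -> R) : (forall i, (i < n)%nat -> f i = g i) -> rsum n f = rsum n g.
Proof. induction n; simpl; intros H; auto; rewrite IHn, H; auto. Qed.

Lemma rsum_eq0 (n : nat) (f : nat -> R) : (forall i, (i < n)%nat -> f i = 0) -> rsum n f = 0.
Proof. induction n; simpl; intros H; auto; rewrite IHn, H; [ring | lia | auto]. Qed.

Lemma rsum_plus (n : nat) (f g : nat -> R) : rsum n (fun i => f i + g i) = rsum n f + rsum n g.
Proof. induction n; simpl; [ring | rewrite IHn; ring]. Qed.

Lemma rsum_scal (n : nat) (c : R) (f : nat -> R) : rsum n (fun i => c * f i) = c * rsum n f.
Proof. induction n; simpl; [ring | rewrite IHn; ring]. Qed.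

Lemma rsum_swap (n p : nat) (f : nat -> nat -> R) :
  rsum n (fun i => rsum p (fun j => f i j)) = rsum p (fun j => rsum n (fun i => f i j)).
Proof.
  induction n; simpl.
  - rewrite rsum_eq0; auto.
  - rewrite IHn, <- rsum_plus; auto.
Qed.

Lemma rsum_ge0 (n : nat) (f : nat -> R) : (forall i, (i < n)%nat -> 0 <= f i) -> 0 <= rsum n f.
Proof.
  induction n; simpl; intros H; [lra |].
  pose proof (H n ltac:(lia)); pose proof (IHn (fun i Hi => H i ltac:(lia))); lra.
Qed.

Lemma rsum_ge_term (n : nat) (f : nat -> R) (i : nat) :
  (forall i, (i < n)%nat -> 0 <= f i) -> (i < n)%nat -> f i <= rsum n f.
Proof.
  induction n; simpl; intros H Hi; [lia |].
  destruct (Nat.eq_dec i n) as [-> | Hne].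
  - pose proof (rsum_ge0 n f (fun j Hj => H j ltac:(lia))); lra.
  - pose proof (IHn (fun j Hj => H j ltac:(lia)) ltac:(lia)); pose proof (H n ltac:(lia)); lra.
Qed.

Lemma rsum_zero (n : nat) (f : nat -> R) : (forall i, (i < n)%nat -> 0 <= f i) -> rsum n f = 0 ->
  forall i, (i < n)%nat -> f i = 0.
Proof. intros H Hs i Hi; pose proof (rsum_ge_term n f i H Hi); pose proof (H i Hi); lra. Qed.

Lemma rsum_pos_ex (n : nat) (f : nat -> R) : rsum n f > 0 -> exists i, (i < n)%nat /\ f i > 0.
Proof.
  induction n; simpl; intros H; [lra |].
  destruct (Rlt_le_dec 0 (f n)) as [Hp | Hp]; [exists n; split; auto |].
  destruct IHn as [i [Hi Hf]]; [lra | exists i; split; auto].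
Qed.

Definition word_from (N : nat) (pi : nat -> nat -> R) (k j : nat) (w : list nat) : Prop :=
  admissible N pi w /\ hd 0%nat w = k /\ last w 0%nat = j.

Lemma acomp_snoc (f : nat -> R -> R) (w : list nat) (j : nat) (x : R) : w <> [] ->
  acomp f (w ++ [j]) x = f (last w 0%nat) (acomp f w x).
Proof.
  revert x; induction w as [|a t IH]; intros x Hw; [congruence |].
  destruct t as [|b t']; [reflexivity |].
  apply (IH (f a x)); congruence.
Qed.

Lemma adm_chain_snoc (pi : nat -> nat -> R) (w : list nat) (j : nat) : w <> [] ->
  adm_chain pi w -> pi (last w 0%nat) j > 0 -> adm_chain pi (w ++ [j]).
Proof.
  induction w as [|a t IH]; intros Hw Hc Hp; [congruence |].
  destruct t as [|b t']; [simpl in *; auto |].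
  destruct Hc as [H1 H2]; split; auto.
  apply IH; auto; congruence.
Qed.

Lemma hd_snoc (w : list nat) (j : nat) : w <> [] -> hd 0%nat (w ++ [j]) = hd 0%nat w.
Proof. destruct w; simpl; congruence. Qed.

Lemma word_snoc (N : nat) (pi : nat -> nat -> R) (f : nat -> R -> R) (k i j : nat)
  (w : list nat) (x : R) :
  word_from N pi k i w -> (j < N)%nat -> pi i j > 0 ->
  word_from N pi k j (w ++ [j]) /\ acomp f (w ++ [j]) x = f i (acomp f w x).
Proof.
  intros [[Hl [Hc Ha]] [Hh Hla]] Hj Hp; subst.
  assert (Hne : w <> []) by (intro; subst; simpl in Hl; lia).
  repeat split.
  - rewrite length_app; lia.
  - intros c Hc'; apply in_app_or in Hc'; destruct Hc' as [H | [<- | []]]; auto.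
  - apply adm_chain_snoc; auto.
  - apply hd_snoc; auto.
  - apply last_last.
  - apply acomp_snoc; auto.
Qed.

Lemma path_of_mpow (N : nat) (a pi : nat -> nat -> R)
  (Ha01 : forall i j, (i < N)%nat -> (j < N)%nat -> a i j = 0 \/ a i j = 1)
  (Hpi_a : forall i j, (i < N)%nat -> (j < N)%nat -> (pi i j > 0 <-> a i j = 1)) :
  forall p i j, (i < N)%nat -> (j < N)%nat -> mpow N a p i j > 0 ->
  exists w, hd 0%nat w = i /\ last w 0%nat = j /\ length w = S p /\
    (forall c, In c w -> (c < N)%nat) /\ adm_chain pi w.
Proof.
  induction p as [|p IH]; intros i j Hi Hj Hm.
  - simpl in Hm; destruct (Nat.eqb_spec i j) as [-> | ]; [| lra].
    exists [j]; repeat split; simpl; auto.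
    intros c [-> | []]; auto.
  - simpl in Hm; destruct (rsum_pos_ex _ _ Hm) as [l [Hl Hp]].
    destruct (Ha01 l j Hl Hj) as [H0 | H1]; [rewrite H0, Rmult_0_r in Hp; lra |].
    rewrite H1, Rmult_1_r in Hp.
    destruct (IH i l Hi Hl Hp) as [w [Hh [Hla [Hlen [HN Hc]]]]].
    assert (Hne : w <> []) by (intro; subst; discriminate).
    exists (w ++ [j]); repeat split.
    + rewrite hd_snoc; auto.
    + apply last_last.
    + rewrite length_app, Hlen; simpl; lia.
    + intros c Hc'; apply in_app_or in Hc'; destruct Hc' as [H | [<- | []]]; auto.
    + apply adm_chain_snoc; auto; rewrite Hla; apply Hpi_a; auto.
Qed.

Lemma words_exist (N : nat) (a pi : nat -> nat -> R)
  (Ha01 : forall i j, (i < N)%nat -> (j < N)%nat -> a i j = 0 \/ a i j = 1)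
  (Hprim : exists p, (1 <= p)%nat /\
     forall i j, (i < N)%nat -> (j < N)%nat -> mpow N a p i j > 0)
  (Hpi_a : forall i j, (i < N)%nat -> (j < N)%nat -> (pi i j > 0 <-> a i j = 1)) :
  forall k j, (k < N)%nat -> (j < N)%nat -> exists w, word_from N pi k j w.
Proof.
  intros k j Hk Hj; destruct Hprim as [p [Hp Hm]].
  destruct (path_of_mpow N a pi Ha01 Hpi_a p k j Hk Hj (Hm k j Hk Hj))
    as [w [Hh [Hl [Hlen [Hc Ha]]]]].
  exists w; repeat split; auto; lia.
Qed.

Lemma acomp_inI (N : nat) (f : nat -> R -> R) (w : list nat) (x : R) :
  (forall i, (i < N)%nat -> good_map (f i)) ->
  (forall c, In c w -> (c < N)%nat) -> inI x -> inI (acomp f w x).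
Proof.
  intros Hf; revert x; induction w as [|a t IH]; intros x Hw Hx; auto.
  destruct t as [|b t']; auto.
  apply IH; [intros c Hc; apply Hw; simpl in *; tauto |].
  destruct (Hf a (Hw a (or_introl eq_refl))) as [_ [_ H]].
  pose proof (H x Hx); unfold inI; lra.
Qed.

Lemma acomp_mono (N : nat) (f : nat -> R -> R) (w : list nat) (x y : R) :
  (forall i, (i < N)%nat -> good_map (f i)) ->
  (forall c, In c w -> (c < N)%nat) -> inI x -> inI y -> x <= y -> acomp f w x <= acomp f w y.
Proof.
  intros Hf; revert x y; induction w as [|a t IH]; intros x y Hw Hx Hy Hxy; auto.
  destruct t as [|b t']; auto.
  assert (Hga := Hf a (Hw a (or_introl eq_refl))); pose proof Hga as [_ [_ H]].
  pose proof (H x Hx); pose proof (H y Hy).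
  apply IH; [intros c Hc; apply Hw; simpl in *; tauto | unfold inI; lra | unfold inI; lra |].
  apply good_le; auto.
Qed.

Lemma supp_inI (m : (R -> Prop) -> R) (x : R) : measure_on_I m -> in_supp m x -> inI x.
Proof.
  intros Hm Hs; apply NNPP; intro Hn.
  set (e := Rmax (- x) (x - 1)).
  assert (He : e > 0) by (unfold e, inI in *; apply Rmax_case_strong; intros; lra).
  pose proof (Hs e He).
  rewrite (M_outside_I m) in H; [lra | auto | apply borel_ball |].
  intros y Hy Hy'; apply Rabs_def2 in Hy; unfold e, inI in *.
  revert Hy; apply Rmax_case_strong; intros; lra.
Qed.

Lemma supp_not_null (m : (R -> Prop) -> R) (B : R -> Prop) (z r : R) :
  measure_on_I m -> borel B -> in_supp m z -> r > 0 ->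
  (forall y, Rabs (y - z) < r -> B y) -> m B <> 0.
Proof.
  intros Hm HB Hz Hr Hy H0.
  pose proof (Hz r Hr).
  assert (m (fun y => Rabs (y - z) < r) <= m B) by (apply M_mono; auto; apply borel_ball).
  lra.
Qed.

Section Supports.
Variables (N : nat) (pi : nat -> nat -> R) (f : nat -> R -> R) (mu : nat -> (R -> Prop) -> R).
Hypothesis Hpn : forall i j, (i < N)%nat -> (j < N)%nat -> 0 <= pi i j.
Hypothesis Hf : forall i, (i < N)%nat -> good_map (f i).
Hypothesis Hms : forall k, (k < N)%nat -> measure_on_I (mu k).
Hypothesis Hst : stationary N pi f mu.

(* An admissible map f_i sends supp mu_i into supp mu_j: by stationarity
   mu_j(U) >= pi_ij mu_i(f_i^-1 U), and f_i^-1 of a ball around f_i x contains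
   a ball around x. *)
Lemma supp_step (i j : nat) (x : R) : (i < N)%nat -> (j < N)%nat -> pi i j > 0 ->
  in_supp (mu i) x -> in_supp (mu j) (f i x).
Proof.
  intros Hi Hj Hpij Hs eps Heps.
  assert (Hx : inI x) by (apply (supp_inI (mu i)); auto).
  destruct (good_contI _ (Hf i Hi) x Hx eps Heps) as [d [Hd Hc]].
  rewrite (Hst j _ Hj (borel_ball _ _)).
  assert (Hnn : forall l, (l < N)%nat ->
     0 <= pi l j * mu l (fun y => inI y /\ Rabs (f l y - f i x) < eps)).
  { intros l Hl; apply Rmult_le_pos; auto; apply M_pos; auto.
    apply (borel_preimage_good (f l) (fun z => Rabs (z - f i x) < eps)); auto; apply borel_ball. }
  eapply Rlt_le_trans; [| apply (rsum_ge_term _ _ i Hnn Hi)].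
  apply Rmult_lt_0_compat; auto.
  eapply Rlt_le_trans; [apply (Hs d Hd) |].
  rewrite (M_inI (mu i)) by (auto; apply borel_ball).
  apply M_mono; auto.
  - apply borel_inter; [apply borel_ball | apply borel_inI].
  - apply (borel_preimage_good (f i) (fun z => Rabs (z - f i x) < eps)); auto; apply borel_ball.
  - intros y [H1 H2]; split; auto.
Qed.

Lemma supp_word (k j : nat) (w : list nat) (x : R) : word_from N pi k j w ->
  in_supp (mu k) x -> in_supp (mu j) (acomp f w x).
Proof.
  intros [[_ [Hw Hc]] [<- <-]]; clear -Hpn Hf Hms Hst Hw Hc.
  revert x; induction w as [|a t IH]; intros x Hs; auto.
  destruct t as [|b t']; auto.
  destruct Hc as [Hab Hc].
  apply IH; auto; [intros c Hc'; apply Hw; simpl in *; tauto |].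
  apply supp_step; auto; apply Hw; simpl; auto.
Qed.

Lemma word_image_bounds (k j : nat) (w : list nat) (A B A' B' x : R) : (k < N)%nat ->
  word_from N pi k j w ->
  is_min_supp (mu k) A -> is_max_supp (mu k) B ->
  is_min_supp (mu j) A' -> is_max_supp (mu j) B' -> A <= x <= B ->
  A' <= acomp f w A /\ acomp f w A <= acomp f w x /\
  acomp f w x <= acomp f w B /\ acomp f w B <= B'.
Proof.
  intros Hk Hw [HA _] [HB _] [_ HA'] [_ HB'] Hx.
  assert (HAI : inI A) by (apply (supp_inI (mu k)); auto).
  assert (HBI : inI B) by (apply (supp_inI (mu k)); auto).
  assert (HxI : inI x) by (unfold inI in *; lra).
  pose proof Hw as [[_ [Hc _]] _].
  repeat split.
  - apply HA', (supp_word k j); auto.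
  - apply (acomp_mono N); auto; lra.
  - apply (acomp_mono N); auto; lra.
  - apply HB', (supp_word k j); auto.
Qed.

End Supports.

Section InvariantFamily.
Variables (N : nat) (pi : nat -> nat -> R) (f : nat -> R -> R) (mu : nat -> (R -> Prop) -> R)
  (E : nat -> R -> Prop).
Hypothesis Hpn : forall i j, (i < N)%nat -> (j < N)%nat -> 0 <= pi i j.
Hypothesis Hps : forall i, (i < N)%nat -> rsum N (fun j => pi i j) = 1.
Hypothesis Hf : forall i, (i < N)%nat -> good_map (f i).
Hypothesis Hms : forall k, (k < N)%nat -> measure_on_I (mu k).
Hypothesis Hst : stationary N pi f mu.
Hypothesis HE : forall j, (j < N)%nat -> borel (E j).
Hypothesis Habs : forall i j x, (i < N)%nat -> (j < N)%nat -> pi i j > 0 ->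
  inI x -> E i x -> E j (f i x).

Definition leak_term (j : nat) (B : R -> Prop) (i : nat) : R :=
  pi i j * mu i (fun x => (inI x /\ B (f i x) /\ E j (f i x)) /\ ~ E i x).

Lemma leak_term_nonneg (j : nat) (B : R -> Prop) (i : nat) :
  (j < N)%nat -> borel B -> (i < N)%nat -> 0 <= leak_term j B i.
Proof.
  intros Hj HB Hi; apply Rmult_le_pos; auto; apply M_pos; auto.
  apply borel_inter; [| apply borel_compl; auto].
  apply (borel_preimage_good (f i) (fun y => B y /\ E j y)); auto; apply borel_inter; auto.
Qed.

Lemma mass_into_E (j : nat) (B : R -> Prop) : (j < N)%nat -> borel B ->
  mu j (fun y => B y /\ E j y) =
  rsum N (fun i => pi i j * mu i (fun x => (inI x /\ B (f i x)) /\ E i x)) +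
  rsum N (leak_term j B).
Proof.
  intros Hj HB.
  rewrite (Hst j _ Hj (borel_inter _ _ HB (HE j Hj))), <- rsum_plus.
  apply rsum_ext; intros i Hi; unfold leak_term.
  rewrite (M_add (mu i) _ (E i) (Hms i Hi)); auto.
  2:{ apply (borel_preimage_good (f i) (fun y => B y /\ E j y)); auto; apply borel_inter; auto. }
  destruct (Hpn i j Hi Hj) as [Hlt | <-]; [| ring].
  rewrite (M_ext (mu i) (fun x => (inI x /\ B (f i x) /\ E j (f i x)) /\ E i x)
                        (fun x => (inI x /\ B (f i x)) /\ E i x)); [ring |].
  intro x; split; [tauto |]; intros [[H1 H2] H3].
  refine (conj (conj H1 (conj H2 _)) H3); apply (Habs i j x); auto.
Qed.

(* Total mass of E is conserved, so the total leak vanishes. *)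
Lemma total_leak_vanishes : rsum N (fun j => rsum N (leak_term j (fun _ => True))) = 0.
Proof.
  assert (H := rsum_ext N _ _ (fun j Hj => mass_into_E j (fun _ => True) Hj borel_true)).
  rewrite rsum_plus, rsum_swap in H.
  rewrite (rsum_ext N (fun j => mu j (fun y => True /\ E j y)) (fun j => mu j (E j))) in H
    by (intros; apply M_ext; tauto).
  rewrite (rsum_ext N (fun i => rsum N _) (fun i => mu i (E i))) in H; [lra |].
  intros i Hi.
  rewrite (rsum_ext N _ (fun j => mu i (E i) * pi i j)), rsum_scal, Hps, Rmult_1_r; auto.
  intros j Hj; rewrite (M_inI (mu i) (E i)) by auto.
  rewrite (M_ext (mu i) (fun x => E i x /\ inI x) (fun x => (inI x /\ True) /\ E i x)) by tauto.
  ring.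
Qed.

(* Each leak is dominated by a term of the vanishing total leak. *)
Lemma leak_vanishes (j : nat) (B : R -> Prop) : (j < N)%nat -> borel B ->
  rsum N (leak_term j B) = 0.
Proof.
  intros Hj HB; apply rsum_eq0; intros i Hi; apply Rle_antisym; [| apply leak_term_nonneg; auto].
  assert (Hnn : forall j', (j' < N)%nat -> forall i, (i < N)%nat -> 0 <= leak_term j' (fun _ => True) i)
    by (intros; apply leak_term_nonneg; auto; apply borel_true).
  rewrite <- (rsum_zero N (leak_term j (fun _ => True)) (Hnn j Hj)
    (rsum_zero N _ (fun j' Hj' => rsum_ge0 _ _ (Hnn j' Hj')) total_leak_vanishes j Hj) i Hi).
  unfold leak_term; apply Rmult_le_compat_l; auto.
  apply M_mono; auto; try tauto;
    (apply borel_inter; [| apply borel_compl; auto]);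
    [apply (borel_preimage_good (f i) (fun y => B y /\ E j y)) |
     apply (borel_preimage_good (f i) (fun y => True /\ E j y))];
    auto; apply borel_inter; auto; apply borel_true.
Qed.

Lemma stationary_on_E (j : nat) (B : R -> Prop) : (j < N)%nat -> borel B ->
  mu j (fun y => B y /\ E j y) =
  rsum N (fun i => pi i j * mu i (fun x => (inI x /\ B (f i x)) /\ E i x)).
Proof. intros Hj HB; rewrite mass_into_E, leak_vanishes; auto; ring. Qed.

Lemma stationary_off_E (j : nat) (B : R -> Prop) : (j < N)%nat -> borel B ->
  mu j (fun y => B y /\ ~ E j y) =
  rsum N (fun i => pi i j * mu i (fun x => (inI x /\ B (f i x)) /\ ~ E i x)).
Proof.
  intros Hj HB.
  assert (Hsplit : mu j B = mu j (fun y => B y /\ E j y) + mu j (fun y => B y /\ ~ E j y))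
    by (apply M_add; auto).
  rewrite (Hst j B Hj HB), stationary_on_E in Hsplit by auto.
  rewrite (rsum_ext N _ (fun i => pi i j * mu i (fun x => (inI x /\ B (f i x)) /\ E i x) +
                                 pi i j * mu i (fun x => (inI x /\ B (f i x)) /\ ~ E i x))),
    rsum_plus in Hsplit; [lra |].
  intros i Hi; rewrite (M_add (mu i) _ (E i) (Hms i Hi)); [ring | | auto].
  apply borel_preimage_good; auto.
Qed.

End InvariantFamily.

Lemma normalized_restriction (N : nat) (pi : nat -> nat -> R) (f : nat -> R -> R)
  (mu : nat -> (R -> Prop) -> R) (F : nat -> R -> Prop) (t : R) :
  (forall k, (k < N)%nat -> measure_on_I (mu k)) ->
  (forall j, (j < N)%nat -> borel (F j)) ->
  (forall j B, (j < N)%nat -> borel B -> mu j (fun y => B y /\ F j y) =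
     rsum N (fun i => pi i j * mu i (fun x => (inI x /\ B (f i x)) /\ F i x))) ->
  rsum N (fun j => mu j (F j)) = t -> 0 < t ->
  stat_prob N pi f (fun j B => / t * mu j (fun y => B y /\ F j y)).
Proof.
  intros Hms HF Hstat Ht Htp; split; [split |].
  - intros k Hk; apply restr_measure; auto; left; apply Rinv_0_lt_compat; auto.
  - rewrite rsum_scal, (rsum_ext N _ (fun j => mu j (F j))), Ht by (intros; apply M_ext; tauto).
    field; lra.
  - intros j B Hj HB.
    rewrite (rsum_ext N _ (fun i => / t * (pi i j * mu i (fun x => (inI x /\ B (f i x)) /\ F i x))))
      by (intros; ring).
    rewrite rsum_scal, Hstat; auto.
Qed.

(* Otherwise mu is a proper convex combination of its two normalized
   restrictions, which ergodicity forces to coincide, although only one of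
   them charges E. *)
Lemma ergodic_dichotomy (N : nat) (pi : nat -> nat -> R) (f : nat -> R -> R)
  (mu : nat -> (R -> Prop) -> R) (E : nat -> R -> Prop)
  (Hpn : forall i j, (i < N)%nat -> (j < N)%nat -> 0 <= pi i j)
  (Hps : forall i, (i < N)%nat -> rsum N (fun j => pi i j) = 1)
  (Hf : forall i, (i < N)%nat -> good_map (f i))
  (Hmu : ergodic N pi f mu)
  (HE : forall j, (j < N)%nat -> borel (E j))
  (Habs : forall i j x, (i < N)%nat -> (j < N)%nat -> pi i j > 0 -> inI x -> E i x -> E j (f i x)) :
  (forall j, (j < N)%nat -> mu j (fun y => ~ E j y) = 0) \/
  (forall j, (j < N)%nat -> mu j (E j) = 0).
Proof.
  destruct Hmu as [[[Hms Hprob] Hst] Herg].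
  assert (HEc : forall j, (j < N)%nat -> borel (fun y => ~ E j y)) by (intros; apply borel_compl; auto).
  set (t := rsum N (fun j => mu j (E j))).
  set (t' := rsum N (fun j => mu j (fun y => ~ E j y))).
  assert (Hsum : t + t' = 1).
  { rewrite <- Hprob; unfold t, t'; rewrite <- rsum_plus; apply rsum_ext; intros j Hj.
    rewrite (M_add (mu j) (fun _ => True) (E j) (Hms j Hj) borel_true (HE j Hj)).
    f_equal; apply M_ext; tauto. }
  assert (Hnn : forall F, (forall j, (j < N)%nat -> borel (F j)) ->
            forall j, (j < N)%nat -> 0 <= mu j (F j)) by (intros; apply M_pos; auto).
  destruct (Req_dec t' 0) as [Hz' | Hnz'];
    [left; apply (rsum_zero N _ (Hnn _ HEc) Hz') |].
  destruct (Req_dec t 0) as [Hz | Hnz]; [right; apply (rsum_zero N _ (Hnn _ HE) Hz) |].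
  exfalso.
  assert (Ht : 0 < t < 1).
  { assert (0 <= t) by exact (rsum_ge0 N _ (Hnn _ HE)).
    assert (0 <= t') by exact (rsum_ge0 N _ (Hnn _ HEc)).
    lra. }
  assert (SP1 := normalized_restriction N pi f mu E t Hms HE
    (stationary_on_E N pi f mu E Hpn Hps Hf Hms Hst HE Habs) eq_refl ltac:(lra)).
  assert (SP2 := normalized_restriction N pi f mu (fun j y => ~ E j y) t' Hms HEc
    (stationary_off_E N pi f mu E Hpn Hps Hf Hms Hst HE Habs) eq_refl ltac:(lra)).
  assert (Hsame := Herg _ _ t SP1 SP2 Ht).
  apply Hnz; unfold t; apply rsum_eq0; intros j Hj.
  assert (H := Hsame ltac:(intros k B Hk HB; replace (1 - t) with t' by lra;
    rewrite (M_add (mu k) B (E k) (Hms k Hk) HB (HE k Hk)); field; auto) j (E j) Hj (HE j Hj)).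
  cbv beta in H.
  rewrite (M_ext (mu j) (fun y => E j y /\ ~ E j y) (fun _ => False)),
          (M_ext (mu j) (fun y => E j y /\ E j y) (E j)) in H by tauto.
  destruct (Hms j Hj) as [H0 _]; rewrite H0, Rmult_0_r in H.
  apply Rmult_integral in H; destruct H as [H | H]; auto.
  exfalso; apply (Rinv_neq_0_compat t); auto.
Qed.

(* Under (G3), the images of a point of I cannot depend only on the target state:
   otherwise these images a_j would satisfy f_i(a_i) = a_j for all admissible (i,j). *)
Lemma word_values_not_constant (N : nat) (pi : nat -> nat -> R) (f : nat -> R -> R)
  (k : nat) (x0 : R)
  (Hf : forall i, (i < N)%nat -> good_map (f i)) (HG3 : G3 N pi f)
  (Hpath : forall j, (j < N)%nat -> exists w, word_from N pi k j w) (Hx0 : inI x0) :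
  ~ (forall j w w', (j < N)%nat -> word_from N pi k j w -> word_from N pi k j w' ->
       acomp f w x0 = acomp f w' x0).
Proof.
  intro Hconst; apply HG3.
  set (P := fun j v => exists w, word_from N pi k j w /\ acomp f w x0 = v).
  exists (fun j => epsilon (inhabits 0) (P j)).
  assert (Hspec : forall j, (j < N)%nat -> P j (epsilon (inhabits 0) (P j))).
  { intros j Hj; apply epsilon_spec.
    destruct (Hpath j Hj) as [w Hw]; exists (acomp f w x0), w; auto. }
  split.
  - intros i Hi; destruct (Hspec i Hi) as [w [[[_ [Hc _]] _] <-]].
    apply (acomp_inI N); auto.
  - intros i j Hi Hj Hp.
    destruct (Hspec i Hi) as [w [Hw <-]]; destruct (Hspec j Hj) as [w' [Hw' <-]].
    destruct (word_snoc N pi f k i j w x0 Hw Hj Hp) as [Hwj Hac].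
    rewrite <- Hac; apply (Hconst j); auto.
Qed.

Lemma signed_ball (s y z r : R) : s = 1 \/ s = -1 -> Rabs (y - z) < r ->
  s * z - r < s * y < s * z + r.
Proof. intros [-> | ->] H; apply Rabs_def2 in H; lra. Qed.

Lemma one_sided_approach (N : nat) (pi : nat -> nat -> R) (f : nat -> R -> R)
  (mu : nat -> (R -> Prop) -> R) (k : nat) (s x0 : R)
  (Hpn : forall i j, (i < N)%nat -> (j < N)%nat -> 0 <= pi i j)
  (Hps : forall i, (i < N)%nat -> rsum N (fun j => pi i j) = 1)
  (Hf : forall i, (i < N)%nat -> good_map (f i))
  (Hmu : ergodic N pi f mu) (HG3 : G3 N pi f) (Hk : (k < N)%nat)
  (Hpath : forall j, (j < N)%nat -> exists w, word_from N pi k j w)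
  (Hs : s = 1 \/ s = -1) (Hx0 : in_supp (mu k) x0) :
  forall j z eps, (j < N)%nat -> in_supp (mu j) z -> eps > 0 ->
    exists w, word_from N pi k j w /\ s * acomp f w x0 < s * z + eps.
Proof.
  pose proof Hmu as [[[Hms _] Hst] _].
  assert (Hx0I : inI x0) by (apply (supp_inI (mu k)); auto).
  set (E := fun j y => exists w, word_from N pi k j w /\ s * acomp f w x0 <= s * y).
  assert (HE : forall j, (j < N)%nat -> borel (E j)).
  { intros j _; apply (borel_signed_upset s); auto.
    intros y z [w [Hw H]] Hyz; exists w; split; auto; lra. }
  assert (Habs : forall i j x, (i < N)%nat -> (j < N)%nat -> pi i j > 0 ->
                   inI x -> E i x -> E j (f i x)).
  { intros i j x Hi Hj Hp Hx [w [Hw H]].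
    destruct (word_snoc N pi f k i j w x0 Hw Hj Hp) as [Hwj Hac].
    exists (w ++ [j]); split; [exact Hwj | rewrite Hac].
    destruct Hw as [[_ [Hc _]] _].
    apply good_signed_le; auto; apply (acomp_inI N); auto. }
  intros j z eps Hj Hz Heps.
  destruct (ergodic_dichotomy N pi f mu E Hpn Hps Hf Hmu HE Habs) as [Hfull | Hnull].
  -
    apply NNPP; intro Hn.
    apply (supp_not_null (mu j) (fun y => ~ E j y) z eps (Hms j Hj)
             (borel_compl _ (HE j Hj)) Hz Heps); [| apply Hfull; auto].
    intros y Hy [w [Hw Hle]]; apply Hn; exists w; split; auto.
    pose proof (signed_ball s y z eps Hs Hy); lra.
  - (* each image of x0 is a support point not inside E, hence the extreme one *)
    exfalso; apply (word_values_not_constant N pi f k x0 Hf HG3 Hpath Hx0I).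
    assert (Hext : forall l u v, (l < N)%nat -> word_from N pi k l u -> word_from N pi k l v ->
              s * acomp f u x0 <= s * acomp f v x0).
    { intros l u v Hl Hu Hv; apply Rnot_lt_le; intro Hlt.
      apply (supp_not_null (mu l) (E l) (acomp f u x0) (s * acomp f u x0 - s * acomp f v x0)
               (Hms l Hl) (HE l Hl) (supp_word N pi f mu Hpn Hf Hms Hst k l u x0 Hu Hx0));
        [lra | | apply Hnull; auto].
      intros y Hy; exists v; split; auto.
      pose proof (signed_ball s y (acomp f u x0) _ Hs Hy); lra. }
    intros l w w' Hl Hw Hw'.
    pose proof (Hext l w w' Hl Hw Hw'); pose proof (Hext l w' w Hl Hw' Hw).
    destruct Hs as [-> | ->]; lra.
Qed.

Theorem mainTheorem6
  (N : nat) (a pi : nat -> nat -> R) (f : nat -> R -> R)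
  (mu : nat -> (R -> Prop) -> R) (k k' : nat)
  (A_k B_k A_k' B_k' : R)
  (HN : (1 <= N)%nat)
  (Ha01 : forall i j, (i < N)%nat -> (j < N)%nat -> a i j = 0 \/ a i j = 1)
  (Hprim : exists p, (1 <= p)%nat /\
     forall i j, (i < N)%nat -> (j < N)%nat -> mpow N a p i j > 0)
  (Hpi_nonneg : forall i j, (i < N)%nat -> (j < N)%nat -> 0 <= pi i j)
  (Hpi_stoch : forall i, (i < N)%nat -> rsum N (fun j => pi i j) = 1)
  (Hpi_a : forall i j, (i < N)%nat -> (j < N)%nat -> (pi i j > 0 <-> a i j = 1))
  (Hf : forall i, (i < N)%nat -> good_map (f i))
  (HG1 : G1 N pi f) (HG2 : G2 N pi f) (HG3 : G3 N pi f)
  (Hmu : ergodic N pi f mu)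
  (Hk : (k < N)%nat) (Hk' : (k' < N)%nat)
  (HAk : is_min_supp (mu k) A_k) (HBk : is_max_supp (mu k) B_k)
  (HAk' : is_min_supp (mu k') A_k') (HBk' : is_max_supp (mu k') B_k') :
  forall eps, eps > 0 ->
    exists wA wB : list nat,
      admissible N pi wA /\ hd 0%nat wA = k /\ last wA 0%nat = k' /\
      admissible N pi wB /\ hd 0%nat wB = k /\ last wB 0%nat = k' /\
      (forall x, A_k <= x <= B_k -> Rabs (acomp f wA x - A_k') < eps) /\
      (forall x, A_k <= x <= B_k -> Rabs (acomp f wB x - B_k') < eps).
Proof.
  intros eps Heps.
  pose proof Hmu as [[[Hms _] Hst] _].
  pose proof (words_exist N a pi Ha01 Hprim Hpi_a k) as Hpath.
  (* G_A pushes B_{mu,k} below A_{mu,k'} + eps, G_B pushes A_{mu,k} above B_{mu,k'} - eps *)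
  destruct (one_sided_approach N pi f mu k 1 B_k Hpi_nonneg Hpi_stoch Hf Hmu HG3 Hk
              (fun j => Hpath j Hk) (or_introl eq_refl) (proj1 HBk) k' A_k' eps Hk' (proj1 HAk') Heps)
    as [wA [HwA HA]].
  destruct (one_sided_approach N pi f mu k (-1) A_k Hpi_nonneg Hpi_stoch Hf Hmu HG3 Hk
              (fun j => Hpath j Hk) (or_intror eq_refl) (proj1 HAk) k' B_k' eps Hk' (proj1 HBk') Heps)
    as [wB [HwB HB]].
  exists wA, wB.
  pose proof (fun x => word_image_bounds N pi f mu Hpi_nonneg Hf Hms Hst k k' wA A_k B_k A_k' B_k' x
                         Hk HwA HAk HBk HAk' HBk') as HboundsA.
  pose proof (fun x => word_image_bounds N pi f mu Hpi_nonneg Hf Hms Hst k k' wB A_k B_k A_k' B_k' x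
                         Hk HwB HAk HBk HAk' HBk') as HboundsB.
  destruct HwA as [HwA [HhA HlA]]; destruct HwB as [HwB [HhB HlB]].
  refine (conj HwA (conj HhA (conj HlA (conj HwB (conj HhB (conj HlB (conj _ _))))))).
  - intros x Hx; destruct (HboundsA x Hx) as [H1 [H2 [H3 H4]]]; apply Rabs_def1; lra.
  - intros x Hx; destruct (HboundsB x Hx) as [H1 [H2 [H3 H4]]]; apply Rabs_def1; lra.
Qed.
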